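(* Let $\beta>0$, $0<\alpha<1$, and define $T\colon\mathbb R\to\mathbb R$ by $Tx=x-\beta$ if $x\le\beta$ and $Tx=\alpha(x-\beta)$ if $x>\beta$. Set $q(x):=\left\lceil\log_\alpha\frac{\beta}{\alpha\beta+(1-\alpha)x}\right\rceil$ for $x>\beta$. Then $\operatorname{Fix}T=\varnothing$, $v:=P_{\overline{\operatorname{ran}}(\mathrm{Id}-T)}0=\beta$, and for all $n\in\mathbb N$ and $x\in\mathbb R$: $(T_{-v})^nx=\alpha^n\max\{x,0\}+\min\{x,0\}$; $(v+T)^nx=\alpha^n\max\{x-\beta,0\}+\min\{x,\beta\}$; $T^nx+nv=x$ if $x\le\beta$; $=\alpha^nx-\frac{\alpha(1-\alpha^n)}{1-\alpha}\beta+n\beta$ if $x>\beta$ and $n<q(x)$; $=\alpha^{q(x)}x-\frac{\alpha(1-\alpha^{q(x)})}{1-\alpha}\beta+q(x)\beta$ if $x>\beta$ and $n\ge q(x)$. Consequently $\lim_n(T_{-v})^nx=\min\{x,0\}$, $\lim_n(v+T)^nx=\min\{x,\beta\}$, and $\lim_n(T^nx+nv)$ equals $x$ if $x\le\beta$ and $\alpha^{q(x)}x-\frac{\alpha(1-\alpha^{q(x)})}{1-\alpha}\beta+q(x)\beta$ if $x>\beta$. Moreover, there is no map $S\colon\mathbb R\to\mathbb R$ such that $S^nx=T^nx+nv$ for all $x\in\mathbb R$ and all $n\in\mathbb N$.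
   Context: $T_{-v}x:=T(x+v)$, $(v+T)x:=v+Tx$, $\operatorname{Fix}$ denotes the fixed point set, and $\overline{\operatorname{ran}}(\mathrm{Id}-T)$ is the closure of the range of $\mathrm{Id}-T$. *)

From Stdlib Require Import Reals Lra ZArith.
Open Scope R_scope.

Definition Tab (alpha beta : R) (x : R) : R :=
  if Rle_dec x beta then x - beta else alpha * (x - beta).

Definition iterR (n : nat) (f : R -> R) (x : R) : R := Nat.iter n f x.

(* T_{-v} x := T (x + v),  (v + T) x := v + T x *)
Definition shift_arg (v : R) (T : R -> R) : R -> R := fun x => T (x + v).
Definition shift_val (v : R) (T : R -> R) : R -> R := fun x => v + T x.

Definition Fix (T : R -> R) (x : R) : Prop := T x = x.

Definition ran_IdmT (T : R -> R) (y : R) : Prop := exists x, y = x - T x.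

Definition closure (A : R -> Prop) (y : R) : Prop :=
  forall eps, 0 < eps -> exists a, A a /\ Rabs (y - a) < eps.

Definition is_proj (C : R -> Prop) (z p : R) : Prop :=
  C p /\ forall c, C c -> Rabs (z - p) <= Rabs (z - c).

Definition Rceil (x : R) : Z := (1 - up (- x))%Z.
Definition log_base (a y : R) : R := ln y / ln a.

Definition qfun (alpha beta x : R) : Z :=
  Rceil (log_base alpha (beta / (alpha * beta + (1 - alpha) * x))).

(* Below [beta] the operator [T] is the translation by [-beta]; above it, it is a contraction
   towards [beta] followed by that translation.  Hence [ran (Id - T) = [beta, +oo)], whose
   point nearest to [0] is [v = beta], and the shifted maps [T_{-v}] and [v + T] act as the
   identity on one half-line and as the contraction [y |-> alpha y] (about [0], resp. [beta])
   on the other.  For [x > beta] the orbit of [T] follows the affine recursion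
   [y |-> alpha (y - beta)] until it first drops below [beta]; the quantity
   [alpha beta + (1 - alpha) x] is multiplied by [alpha] at each such step, which is why that
   first time is the logarithmic [q x].  From then on [T] only subtracts [beta], so
   [T^n x + n beta] is eventually constant.  Finally, [S^1 = T + beta] would force
   [S = v + T], whose second iterate at [2 beta] differs from [T^2 (2 beta) + 2 beta]. *)
From Stdlib Require Import Reals Lra ZArith Lia.
Open Scope R_scope.

Lemma iterR_S (n : nat) (f : R -> R) (x : R) : iterR (S n) f x = f (iterR n f x).
Proof. reflexivity. Qed.

Lemma iterR_add (m n : nat) (f : R -> R) (x : R) :
  iterR (m + n) f x = iterR m f (iterR n f x).
Proof. induction m as [|m IH]; [reflexivity|]. now rewrite Nat.add_succ_l, !iterR_S, IH. Qed.

Lemma Un_cv_pow_affine (a c d : R) :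
  0 < a -> a < 1 -> Un_cv (fun n => a ^ n * c + d) d.
Proof.
  intros Ha0 Ha1.
  assert (Hpow : Un_cv (fun n => a ^ n) 0).
  { intros eps Heps.
    destruct (pow_lt_1_zero a ltac:(rewrite Rabs_right; lra) eps Heps) as [N HN].
    exists N; intros n Hn; unfold R_dist; rewrite Rminus_0_r; now apply HN. }
  assert (Hcst : forall r, Un_cv (fun _ => r) r).
  { intros r eps Heps; exists O; intros; unfold R_dist; rewrite Rminus_diag, Rabs_R0; lra. }
  assert (Hlim : Un_cv (fun n => a ^ n * c + d) (0 * c + d))
    by (apply CV_plus; [apply CV_mult|]; auto).
  now rewrite Rmult_0_l, Rplus_0_l in Hlim.
Qed.

Lemma Un_cv_eventually_const (u : nat -> R) (l : R) (N : nat) :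
  (forall n, (N <= n)%nat -> u n = l) -> Un_cv u l.
Proof.
  intros Hu eps Heps; exists N; intros n Hn; unfold R_dist.
  rewrite Hu by lia; rewrite Rminus_diag, Rabs_R0; lra.
Qed.

Lemma Rceil_gt_iff (z : Z) (y : R) : (z < Rceil y)%Z <-> IZR z < y.
Proof.
  unfold Rceil; destruct (archimed (- y)) as [Hup1 Hup2].
  split; intros H.
  - assert (Hz : (up (- y) <= - z)%Z) by lia.
    apply IZR_le in Hz; rewrite opp_IZR in Hz; lra.
  - assert (Hz : (up (- y) < 1 - z)%Z) by (apply lt_IZR; rewrite minus_IZR; lra).
    lia.
Qed.

Lemma log_base_gt_iff (a r : R) (k : nat) :
  0 < a -> a < 1 -> 0 < r -> INR k < log_base a r <-> r < a ^ k.
Proof.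
  intros Ha0 Ha1 Hr; unfold log_base.
  assert (Hln : ln a < 0) by (rewrite <- ln_1; apply ln_increasing; lra).
  assert (Hpow : 0 < a ^ k) by (apply pow_lt; lra).
  assert (Hdiv : INR k < ln r / ln a <-> ln r < INR k * ln a).
  { assert (Hu : ln r = ln r / ln a * ln a) by (field; lra).
    set (u := ln r / ln a) in *; split; intros; nra. }
  rewrite Hdiv, <- ln_pow by lra.
  split; [apply ln_lt_inv | apply ln_increasing]; lra.
Qed.

Lemma closure_ray (A : R -> Prop) (b : R) :
  (forall c, A c <-> b <= c) -> forall c, closure A c <-> b <= c.
Proof.
  intros HA c; split.
  - intros Hc; destruct (Rle_lt_dec b c) as [Hbc|Hcb]; [exact Hbc|].
    destruct (Hc (b - c) ltac:(lra)) as [a [Ha Hca]]; apply HA in Ha.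
    rewrite Rabs_left in Hca; lra.
  - intros Hbc eps Heps; exists c; split; [now apply HA|].
    rewrite Rminus_diag, Rabs_R0; lra.
Qed.

Lemma is_proj_0_ray (C : R -> Prop) (b : R) :
  0 <= b -> (forall c, C c <-> b <= c) -> forall p, is_proj C 0 p <-> p = b.
Proof.
  intros Hb HC p; unfold is_proj; rewrite HC.
  setoid_rewrite HC; setoid_rewrite Rminus_0_l; setoid_rewrite Rabs_Ropp.
  split.
  - intros [Hp Hmin]; specialize (Hmin b (Rle_refl b)).
    rewrite !Rabs_right in Hmin; lra.
  - intros ->; split; [lra|]; intros c Hc; rewrite !Rabs_right; lra.
Qed.

Section PiecewiseAffine.

Variables alpha beta : R.
Hypothesis Hbeta : 0 < beta.
Hypothesis Halpha0 : 0 < alpha.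
Hypothesis Halpha1 : alpha < 1.

Let T := Tab alpha beta.

Lemma Tab_le (y : R) : y <= beta -> T y = y - beta.
Proof. intros; unfold T, Tab; destruct Rle_dec; lra. Qed.

Lemma Tab_gt (y : R) : beta < y -> T y = alpha * (y - beta).
Proof. intros; unfold T, Tab; destruct Rle_dec; lra. Qed.

Lemma Tab_no_fixpoint (x : R) : ~ Fix T x.
Proof.
  unfold Fix; destruct (Rle_lt_dec x beta) as [Hx|Hx];
    [rewrite Tab_le | rewrite Tab_gt]; nra.
Qed.

Lemma ran_IdmT_Tab (c : R) : ran_IdmT T c <-> beta <= c.
Proof.
  split.
  - intros [y ->]; destruct (Rle_lt_dec y beta) as [Hy|Hy];
      [rewrite Tab_le | rewrite Tab_gt]; nra.
  - intros Hc; destruct (Rle_lt_dec c beta) as [Hcb|Hcb].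
    + exists 0; rewrite Tab_le; lra.
    + (* solve [y - T y = (1 - alpha) y + alpha beta = c] *)
      exists ((c - alpha * beta) / (1 - alpha)).
      assert (Hy : beta < (c - alpha * beta) / (1 - alpha)).
      { apply Rmult_lt_reg_r with (1 - alpha); [lra|].
        unfold Rdiv; rewrite Rmult_assoc, Rinv_l; lra. }
      rewrite Tab_gt by exact Hy; field; lra.
Qed.

Lemma iterR_shift_arg_Tab (n : nat) (x : R) :
  iterR n (shift_arg beta T) x = alpha ^ n * Rmax x 0 + Rmin x 0.
Proof.
  unfold shift_arg; destruct (Rle_lt_dec x 0) as [Hx|Hx].
  - rewrite Rmax_right, Rmin_left by lra; rewrite Rmult_0_r, Rplus_0_l.
    induction n as [|n IH]; [reflexivity|].
    rewrite iterR_S, IH, Tab_le; lra.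
  - rewrite Rmax_left, Rmin_right by lra; rewrite Rplus_0_r.
    induction n as [|n IH]; [simpl; ring|].
    assert (0 < alpha ^ n) by (apply pow_lt; lra).
    rewrite iterR_S, IH, Tab_gt by nra; simpl; ring.
Qed.

Lemma iterR_shift_val_Tab (n : nat) (x : R) :
  iterR n (shift_val beta T) x = alpha ^ n * Rmax (x - beta) 0 + Rmin x beta.
Proof.
  unfold shift_val; destruct (Rle_lt_dec x beta) as [Hx|Hx].
  - rewrite Rmax_right, Rmin_left by lra; rewrite Rmult_0_r, Rplus_0_l.
    induction n as [|n IH]; [reflexivity|].
    rewrite iterR_S, IH, Tab_le; lra.
  - rewrite Rmax_left, Rmin_right by lra.
    induction n as [|n IH]; [simpl; ring|].
    assert (0 < alpha ^ n) by (apply pow_lt; lra).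
    rewrite iterR_S, IH, Tab_gt by nra; simpl; ring.
Qed.

Lemma iterR_Tab_le (n : nat) (y : R) : y <= beta -> iterR n T y = y - INR n * beta.
Proof.
  intros Hy; induction n as [|n IH]; [simpl; ring|].
  assert (0 <= INR n) by apply pos_INR.
  rewrite iterR_S, IH, S_INR, Tab_le by nra; ring.
Qed.

Definition Tab_orbit (n : nat) (x : R) : R :=
  alpha ^ n * x - alpha * (1 - alpha ^ n) / (1 - alpha) * beta.

Lemma Tab_orbit_gt_iff (n : nat) (x : R) :
  beta < Tab_orbit n x <-> beta < alpha ^ n * (alpha * beta + (1 - alpha) * x).
Proof.
  assert (Hid : (1 - alpha) * (Tab_orbit n x - beta)
                = alpha ^ n * (alpha * beta + (1 - alpha) * x) - beta)
    by (unfold Tab_orbit; field; lra).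
  split; intros; nra.
Qed.

Lemma iterR_Tab_orbit (n : nat) (x : R) :
  (forall k, (k < n)%nat -> beta < alpha ^ k * (alpha * beta + (1 - alpha) * x)) ->
  iterR n T x = Tab_orbit n x.
Proof.
  induction n as [|n IH]; intros Hk; [unfold Tab_orbit; simpl; field; lra|].
  rewrite iterR_S, IH by (intros; apply Hk; lia).
  rewrite Tab_gt by (apply Tab_orbit_gt_iff, Hk; lia).
  unfold Tab_orbit; simpl; field; lra.
Qed.

Lemma qfun_gt_iff (x : R) (k : nat) : beta < x ->
  (Z.of_nat k < qfun alpha beta x)%Z <-> beta < alpha ^ k * (alpha * beta + (1 - alpha) * x).
Proof.
  intros Hx; unfold qfun.
  set (D := alpha * beta + (1 - alpha) * x).
  assert (HD : 0 < D) by (unfold D; nra).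
  assert (Hr : beta = beta / D * D) by (field; lra).
  assert (0 < beta / D) by (apply Rdiv_lt_0_compat; lra).
  rewrite Rceil_gt_iff, <- INR_IZR_INZ, log_base_gt_iff by lra.
  set (r := beta / D) in *; split; intros; nra.
Qed.

Lemma qfun_pos (x : R) : beta < x -> (0 < qfun alpha beta x)%Z.
Proof. intros Hx; apply (qfun_gt_iff x 0 Hx); simpl; nra. Qed.

Lemma iterR_Tab_before_q (n : nat) (x : R) :
  beta < x -> (Z.of_nat n < qfun alpha beta x)%Z -> iterR n T x = Tab_orbit n x.
Proof. intros Hx Hn; apply iterR_Tab_orbit; intros k Hk; apply (qfun_gt_iff x k Hx); lia. Qed.

Lemma iterR_Tab_after_q (n : nat) (x : R) :
  beta < x -> (qfun alpha beta x <= Z.of_nat n)%Z ->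
  iterR n T x + INR n * beta
  = powerRZ alpha (qfun alpha beta x) * x
    - alpha * (1 - powerRZ alpha (qfun alpha beta x)) / (1 - alpha) * beta
    + IZR (qfun alpha beta x) * beta.
Proof.
  intros Hx Hn.
  pose proof (qfun_pos x Hx) as Hq.
  set (m := Z.to_nat (qfun alpha beta x)).
  assert (Hm : Z.of_nat m = qfun alpha beta x) by (apply Z2Nat.id; lia).
  rewrite <- Hm, <- pow_powerRZ, <- INR_IZR_INZ.
  replace n with ((n - m) + m)%nat by lia.
  assert (Hexit : Tab_orbit m x <= beta).
  { apply Rnot_lt_le; rewrite Tab_orbit_gt_iff, <- qfun_gt_iff by exact Hx; lia. }
  rewrite iterR_add, (iterR_Tab_orbit m)
    by (intros k Hk; apply (qfun_gt_iff x k Hx); lia).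
  rewrite iterR_Tab_le by exact Hexit.
  rewrite plus_INR, minus_INR by lia; unfold Tab_orbit; ring.
Qed.

Lemma no_map_iterates_to_Tab_plus_drift :
  ~ exists S : R -> R, forall (x : R) (n : nat), iterR n S x = iterR n T x + INR n * beta.
Proof.
  intros [S HS].
  assert (HS1 : forall y, S y = shift_val beta T y)
    by (intros y; specialize (HS y 1%nat); unfold shift_val; simpl in HS; lra).
  specialize (HS (2 * beta) 2%nat).
  change (iterR 2 S (2 * beta)) with (S (S (2 * beta))) in HS.
  rewrite !HS1 in HS.
  change (shift_val beta T (shift_val beta T (2 * beta)))
    with (iterR 2 (shift_val beta T) (2 * beta)) in HS.
  change (iterR 2 T (2 * beta)) with (T (T (2 * beta))) in HS.
  rewrite iterR_shift_val_Tab, Rmax_left, Rmin_right, (Tab_gt (2 * beta)),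
    (Tab_le (alpha * (2 * beta - beta))) in HS by nra.
  simpl in HS.
  assert (0 < alpha * (1 - alpha) * beta) by (apply Rmult_lt_0_compat; nra).
  nra.
Qed.

End PiecewiseAffine.

Theorem mainTheorem7 (alpha beta : R) (Hb : 0 < beta) (Ha0 : 0 < alpha) (Ha1 : alpha < 1) :
  let T := Tab alpha beta in
  let q := qfun alpha beta in
  (forall x, ~ Fix T x) /\
  (forall p, is_proj (closure (ran_IdmT T)) 0 p <-> p = beta) /\
  (forall (n : nat) (x : R),
      iterR n (shift_arg beta T) x = alpha ^ n * Rmax x 0 + Rmin x 0) /\
  (forall (n : nat) (x : R),
      iterR n (shift_val beta T) x = alpha ^ n * Rmax (x - beta) 0 + Rmin x beta) /\
  (forall (n : nat) (x : R),
      (x <= beta -> iterR n T x + INR n * beta = x) /\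
      (beta < x -> (Z.of_nat n < q x)%Z ->
         iterR n T x + INR n * beta =
           alpha ^ n * x - alpha * (1 - alpha ^ n) / (1 - alpha) * beta + INR n * beta) /\
      (beta < x -> (q x <= Z.of_nat n)%Z ->
         iterR n T x + INR n * beta =
           powerRZ alpha (q x) * x - alpha * (1 - powerRZ alpha (q x)) / (1 - alpha) * beta
           + IZR (q x) * beta)) /\
  (forall x, Un_cv (fun n => iterR n (shift_arg beta T) x) (Rmin x 0)) /\
  (forall x, Un_cv (fun n => iterR n (shift_val beta T) x) (Rmin x beta)) /\
  (forall x, x <= beta -> Un_cv (fun n => iterR n T x + INR n * beta) x) /\
  (forall x, beta < x ->
     Un_cv (fun n => iterR n T x + INR n * beta)
       (powerRZ alpha (q x) * x - alpha * (1 - powerRZ alpha (q x)) / (1 - alpha) * beta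
        + IZR (q x) * beta)) /\
  ~ (exists S : R -> R, forall (x : R) (n : nat),
        iterR n S x = iterR n T x + INR n * beta).
Proof.
  intros T q; unfold T, q.
  split; [intros x; now apply Tab_no_fixpoint|].
  split.
  { apply is_proj_0_ray; [lra|]; apply closure_ray; intros c; now apply ran_IdmT_Tab. }
  split; [intros n x; now apply iterR_shift_arg_Tab|].
  split; [intros n x; now apply iterR_shift_val_Tab|].
  split.
  { intros n x; split; [|split]; intros Hx.
    - rewrite iterR_Tab_le by auto; ring.
    - intros Hn; now rewrite iterR_Tab_before_q.
    - intros Hn; now apply iterR_Tab_after_q. }
  split.
  { intros x; eapply Un_cv_ext; [intros n; symmetry; apply iterR_shift_arg_Tab; auto|].
    now apply Un_cv_pow_affine. }
  split.
  { intros x; eapply Un_cv_ext; [intros n; symmetry; apply iterR_shift_val_Tab; auto|].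
    now apply Un_cv_pow_affine. }
  split.
  { intros x Hx; apply (Un_cv_eventually_const _ _ 0); intros n _.
    rewrite iterR_Tab_le by auto; ring. }
  split.
  { intros x Hx; apply (Un_cv_eventually_const _ _ (Z.to_nat (qfun alpha beta x))).
    intros n Hn.
    pose proof (qfun_pos alpha beta Hb Ha0 Ha1 x Hx).
    apply iterR_Tab_after_q; auto; lia. }
  now apply no_map_iterates_to_Tab_plus_drift.
Qed.
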